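(* Let $N, M, p, q, r, \hat r$ be nonnegative integers and consider the model $$Y = A Z^{\mathrm T} + X B^{\mathrm T} + U V^{\mathrm T} + E,$$ where $Y \in \mathbb{R}^{N\times M}$ is observed, $X \in \mathbb{R}^{N\times p}$ and $Z\in\mathbb{R}^{M\times q}$ are known matrices of full column rank, $A\in\mathbb{R}^{N\times q}$, $B\in\mathbb{R}^{M\times p}$, $U\in\mathbb{R}^{N\times r}$, $V\in\mathbb{R}^{M\times r}$ are unknown, $UV^{\mathrm T}$ has rank $r$, and the identifiability constraints $X^{\mathrm T}U = 0$ and $Z^{\mathrm T}V=0$ hold. Assume the rows of $E\in\mathbb{R}^{N\times M}$ are independent mean-zero multivariate normal random vectors with covariance matrix $\Sigma$. Let $s\in\mathbb{R}^M$ satisfy $Z^{\mathrm T}s = 0$ and put $\sigma^2(s) = s^{\mathrm T}\Sigma s$ (assumed positive). Let $H_X = X(X^{\mathrm T}X)^{-1}X^{\mathrm T}$, $H_Z = Z(Z^{\mathrm T}Z)^{-1}Z^{\mathrm T}$. The least squares fit with $\hat r$ estimated latent factors is obtained as follows: the regression residual is $\hat E_0 = (I-H_X)Y(I-H_Z)$, the estimated factor term $\hat U\hat V^{\mathrm T}$ is the rank-$\hat r$ truncated singular value decomposition of $\hat E_0$ (sum of its leading $\hat r$ singular terms), and the residual matrix is $\hat E = \hat E_0 - \hat U \hat V^{\mathrm T}$. Define $$\mathrm{df}_{\mathrm{resid}}(s) = \mathbb{E}\big(s^{\mathrm T}\hat E^{\mathrm T}\hat E s\big)/\sigma^2(s).$$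 Let $X = Q_1 R$ be the polar decomposition of $X$ ($Q_1\in\mathbb{R}^{N\times p}$ with orthonormal columns, $R\in\mathbb{R}^{p\times p}$ symmetric positive definite) and $Z = P_1 S$ the polar decomposition of $Z$. Choose $Q_2\in\mathbb{R}^{N\times(N-p)}$ and $P_2\in\mathbb{R}^{M\times (M-q)}$ such that $[Q_1\ Q_2]$ and $[P_1\ P_2]$ are orthogonal matrices. Set $n = N-p$, $m = M-q$, $Y_{22} = Q_2^{\mathrm T} Y P_2\in\mathbb{R}^{n\times m}$ and $s_2 = P_2^{\mathrm T}s$. Let $\hat U_2\hat V_2^{\mathrm T}$ be the rank-$\hat r$ truncated singular value decomposition of $Y_{22}$, let $\hat E_{22} = Y_{22} - \hat U_2 \hat V_2^{\mathrm T}$, and define $$\mathrm{df}^{(2)}_{\mathrm{resid}}(s_2) = \mathbb{E}\big(s_2^{\mathrm T}\hat E_{22}^{\mathrm T}\hat E_{22}s_2\big)/\sigma^2(s).$$ Then $\mathrm{df}_{\mathrm{resid}}(s) = \mathrm{df}^{(2)}_{\mathrm{resid}}(s_2)$.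
   Context: The reduced data $Y_{22}$ satisfy $Y_{22} = U_2V_2^{\mathrm T} + E_{22}$ with $U_2 = Q_2^{\mathrm T}U$, $V_2 = P_2^{\mathrm T}V$, $E_{22}=Q_2^{\mathrm T}EP_2$, whose rows are independent $N(0, P_2^{\mathrm T}\Sigma P_2)$ vectors; this is the covariate-free model.
   Formalization: The rank-r̂ truncated singular value decomposition of $\hat E_0$ is assumed almost surely unique, and $s^{\mathrm T}\hat E^{\mathrm T}\hat E s$ and $s_2^{\mathrm T}\hat E_{22}^{\mathrm T}\hat E_{22}s_2$ are assumed measurable. Apart from conventions, each condition added here is assumed in the paper as well or is needed for the statement above to hold. *)

From HB Require Import structures.
From mathcomp Require Import all_boot all_order all_algebra.
From mathcomp Require Import all_classical all_reals all_analysis.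
Set Implicit Arguments. Unset Strict Implicit. Unset Printing Implicit Defensive.
Import Order.TTheory GRing.Theory Num.Theory.
Local Open Scope classical_set_scope.
Local Open Scope ring_scope.

Section Defs.
Variable R : realType.

Definition is_svd (n m : nat) (A : 'M[R]_(n, m)) (Uf : 'M[R]_(n, minn n m))
  (d : 'rV[R]_(minn n m)) (Vf : 'M[R]_(m, minn n m)) : Prop :=
  [/\ Uf^T *m Uf = 1%:M, Vf^T *m Vf = 1%:M,
      (forall i, 0 <= d 0 i),
      (forall i j : 'I_(minn n m), (i <= j)%N -> d 0 j <= d 0 i) &
      A = Uf *m diag_mx d *m Vf^T].

Definition truncated_svd (n m : nat) (k : nat) (A : 'M[R]_(n, m))
  (T : 'M[R]_(n, m)) : Prop :=
  exists Uf d Vf, is_svd A Uf d Vf /\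
    T = \sum_(i < minn n m | (i < k)%N) d 0 i *: (col i Uf *m (col i Vf)^T).

Definition centered_normal_law (v : R) : set R -> \bar R :=
  if v == 0 then \d_(0 : R) else normal_prob 0 (Num.sqrt v).

Definition posdef (k : nat) (A : 'M[R]_k) : Prop :=
  A^T = A /\ forall v : 'cV[R]_k, v != 0 -> 0 < (v^T *m A *m v) 0 0.
Definition psd (k : nat) (A : 'M[R]_k) : Prop :=
  A^T = A /\ forall v : 'cV[R]_k, 0 <= (v^T *m A *m v) 0 0.

Definition hat_mx (N p : nat) (X : 'M[R]_(N, p)) : 'M[R]_N :=
  X *m invmx (X^T *m X) *m X^T.

Definition resid_quad (n m : nat) (E : 'M[R]_(n, m)) (s : 'cV[R]_m) : R :=
  (s^T *m E^T *m E *m s) 0 0.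

End Defs.

From HB Require Import structures.
From mathcomp Require Import all_boot all_order all_algebra.
From mathcomp Require Import all_classical all_reals all_analysis.
From mathcomp Require Import measurable_realfun.
Import Order.TTheory GRing.Theory Num.Theory.
Local Open Scope classical_set_scope.
Local Open Scope ring_scope.

Set Implicit Arguments. Unset Strict Implicit. Unset Printing Implicit Defensive.

(* With Q2, P2 completing the polar factors of X and Z, the projections
   I - H_X and I - H_Z are Q2 Q2^T and P2 P2^T, so E0 = Q2 Y22 P2^T.
   Conjugating an SVD of Y22 by the isometries Q2, P2 and completing its
   singular vectors to orthonormal families (padding with zero singular
   values) gives an SVD of E0 whose leading rhat terms are Q2 T22 P2^T.
   Where the truncated SVD of E0 is unique this forces Ehat = Q2 Ehat22 P2^T,
   and s^T Ehat^T Ehat s = s2^T Ehat22^T Ehat22 s2 since Q2^T Q2 = I.  The two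
   integrands thus agree almost surely; no distributional assumption on E is
   used. *)

Section OrthonormalFamilies.
Variable R : realType.

Definition orthonormal_upto n (f : nat -> 'cV[R]_n) (K : nat) : Prop :=
  forall a b, (a < K)%N -> (b < K)%N -> ((f a)^T *m f b) 0 0 = (a == b)%:R.

Lemma cV_dotC n (u v : 'cV[R]_n) : (u^T *m v) 0 0 = (v^T *m u) 0 0.
Proof. by rewrite !mxE; apply: eq_bigr => i _; rewrite !mxE mulrC. Qed.

Lemma cV_dot_self_gt0 n (v : 'cV[R]_n) : v != 0 -> 0 < (v^T *m v) 0 0.
Proof.
move=> vN0; rewrite mxE.
have [i vi] : exists i, v i 0 != 0.
  apply/existsP; apply: contraR vN0 => /existsPn v0.
  by apply/eqP/matrixP => a b; rewrite ord1 mxE; apply/eqP/negPn/v0.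
rewrite (bigD1 i) //= ltr_pwDl //.
  by rewrite mxE -expr2 lt_def sqr_ge0 sqrf_eq0 vi.
by apply: sumr_ge0 => j _; rewrite mxE -expr2 sqr_ge0.
Qed.

Lemma exists_unit_orthogonal n K (f : nat -> 'cV[R]_n) : (K < n)%N ->
  exists v : 'cV[R]_n, (forall a, (a < K)%N -> ((f a)^T *m v) 0 0 = 0) /\
                       (v^T *m v) 0 0 = 1.
Proof.
move=> Kn; pose W : 'M[R]_(n, K) := \matrix_(i, j) f j i 0.
have rk_ker : (0 < \rank (kermx W))%N.
  by rewrite mxrank_ker subn_gt0 (leq_ltn_trans (rank_leq_col W)).
have [i ker_i] : exists i, row i (kermx W) != 0.
  apply/existsP; apply: contraTT rk_ker => /existsPn ker0.
  suff -> : kermx W = 0 by rewrite mxrank0.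
  by apply/row_matrixP => i; rewrite row0; apply/eqP/negPn/ker0.
pose v := (row i (kermx W))^T.
have vW : v^T *m W = 0 by rewrite trmxK; apply/sub_kermxP; apply: row_sub.
have v_gt0 : 0 < (v^T *m v) 0 0 by rewrite cV_dot_self_gt0 ?trmx_eq0.
pose c := Num.sqrt ((v^T *m v) 0 0).
have c_gt0 : 0 < c by rewrite sqrtr_gt0.
exists (c^-1 *: v); split.
  move=> a aK; rewrite -scalemxAr mxE.
  have := congr1 (fun M : 'M[R]_(1, K) => M 0 (Ordinal aK)) vW; rewrite !mxE.
  move=> vfa; rewrite [X in _ * X](_ : _ = 0) ?mulr0 // -[RHS]vfa.
  by apply: eq_bigr => j _; rewrite !mxE mulrC.
have -> : (c^-1 *: v)^T = c^-1 *: v^T by apply/matrixP => i1 j1; rewrite !mxE.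
rewrite -scalemxAl -scalemxAr scalerA mxE.
have -> : (v^T *m v) 0 0 = c ^+ 2 by rewrite sqr_sqrtr // ltW.
by rewrite expr2 mulrA divfK ?mulVf // lt0r_neq0.
Qed.

Lemma orthonormal_extend n K0 K (f : nat -> 'cV[R]_n) :
  (K0 <= K)%N -> (K <= n)%N -> orthonormal_upto f K0 ->
  exists g, orthonormal_upto g K /\ forall a, (a < K0)%N -> g a = f a.
Proof.
elim: K => [|K IH] K0K Kn onf; first by exists f.
have [<-|K0NK] := eqVneq K0 K.+1; first by exists f.
have K0K' : (K0 <= K)%N by rewrite -ltnS ltn_neqAle K0NK.
have [g [ong gf]] := IH K0K' (ltnW Kn) onf.
have [v [vg v1]] := exists_unit_orthogonal g Kn.
exists (fun a => if a == K then v else g a); split; last first.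
  by move=> a aK0; rewrite ltn_eqF ?gf // (leq_trans aK0 K0K').
move=> a b; rewrite !ltnS [(a <= K)%N]leq_eqVlt [(b <= K)%N]leq_eqVlt.
case/predU1P=> [->|aK] /predU1P[->|bK].
- by rewrite eqxx v1.
- by rewrite eqxx (ltn_eqF bK) cV_dotC vg // eq_sym (ltn_eqF bK).
- by rewrite eqxx (ltn_eqF aK) vg.
- by rewrite (ltn_eqF aK) (ltn_eqF bK) ong.
Qed.

End OrthonormalFamilies.

Section ZeroExtension.
Variable V : zmodType.

Definition ord_zext k (v : 'I_k -> V) (j : nat) : V :=
  if insub j is Some o then v o else 0.

Lemma ord_zext_ord k (v : 'I_k -> V) (o : 'I_k) : ord_zext v o = v o.
Proof. by rewrite /ord_zext valK. Qed.

Lemma ord_zextE k (v : 'I_k -> V) j (jk : (j < k)%N) :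
  ord_zext v j = v (Ordinal jk).
Proof. by rewrite -[j]/(val (Ordinal jk)) ord_zext_ord. Qed.

Lemma ord_zext_ge k (v : 'I_k -> V) j : (k <= j)%N -> ord_zext v j = 0.
Proof. by move=> kj; rewrite /ord_zext insubN // -leqNgt. Qed.

Lemma sum_ord_zext k K (F : 'I_k -> V) (P : pred nat) : (k <= K)%N ->
  \sum_(j < K | P j) ord_zext F j = \sum_(o < k | P o) F o.
Proof.
move=> kK; rewrite -(eq_bigr _ (fun o _ => ord_zext_ord F o)).
rewrite (big_ord_widen_cond K P (ord_zext F) kK) [RHS]big_mkcond [LHS]big_mkcond.
apply: eq_bigr => j _ /=.
by case: (P j) => //=; case: ltnP => // kj; rewrite ord_zext_ge.
Qed.

End ZeroExtension.

Section TruncatedSVD.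
Variable R : realType.

Definition svd_term n m k (Uf : 'M[R]_(n, k)) (d : 'rV[R]_k) (Vf : 'M[R]_(m, k))
  (j : 'I_k) : 'M[R]_(n, m) :=
  d 0 j *: (col j Uf *m (col j Vf)^T).

Lemma svd_term_sum n m k (Uf : 'M[R]_(n, k)) (d : 'rV[R]_k) (Vf : 'M[R]_(m, k)) :
  Uf *m diag_mx d *m Vf^T = \sum_j svd_term Uf d Vf j.
Proof.
apply/matrixP => i l; rewrite mxE summxE; apply: eq_bigr => j _.
rewrite !mxE big_ord1 !mxE (bigD1 j) //= !mxE eqxx mulr1n big1 ?addr0.
  by rewrite mulrA [d 0 j * _]mulrC.
by move=> j' j'j; rewrite !mxE (negbTE j'j) mulr0n mulr0 ?mul0r.
Qed.

Lemma col_dotE n k (U : 'M[R]_(n, k)) a b :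
  ((col a U)^T *m col b U) 0 0 = (U^T *m U) a b.
Proof. by rewrite !mxE; apply: eq_bigr => i _; rewrite !mxE. Qed.

Lemma orthonormal_cols n N k (Q : 'M[R]_(N, n)) (Uf : 'M[R]_(n, k)) :
  Q^T *m Q = 1%:M -> Uf^T *m Uf = 1%:M ->
  orthonormal_upto (ord_zext (fun o => Q *m col o Uf)) k.
Proof.
move=> QQ UU a b ak bk; rewrite !ord_zextE trmx_mul -mulmxA (mulmxA Q^T) QQ.
by rewrite mul1mx col_dotE UU mxE.
Qed.

Definition fam_mx n K (g : nat -> 'cV[R]_n) : 'M[R]_(n, K) :=
  \matrix_(i, j) g j i 0.

Lemma col_fam_mx n K (g : nat -> 'cV[R]_n) (j : 'I_K) : col j (fam_mx K g) = g j.
Proof. by apply/matrixP => i l; rewrite !mxE ord1. Qed.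

Lemma fam_mx_orthonormal n K (g : nat -> 'cV[R]_n) :
  orthonormal_upto g K -> (fam_mx K g)^T *m fam_mx K g = 1%:M.
Proof.
by move=> ong; apply/matrixP => a b; rewrite -col_dotE !col_fam_mx ong // mxE.
Qed.

Lemma svd_isometry_extend n m N M (Q : 'M[R]_(N, n)) (P : 'M[R]_(M, m))
    (Uf : 'M[R]_(n, minn n m)) (d : 'rV[R]_(minn n m)) (Vf : 'M[R]_(m, minn n m)) :
  (n <= N)%N -> (m <= M)%N -> Q^T *m Q = 1%:M -> P^T *m P = 1%:M ->
  Uf^T *m Uf = 1%:M -> Vf^T *m Vf = 1%:M -> (forall i, 0 <= d 0 i) ->
  (forall i j : 'I_(minn n m), (i <= j)%N -> d 0 j <= d 0 i) ->
  exists (Uf' : 'M[R]_(N, minn N M)) (d' : 'rV[R]_(minn N M))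
         (Vf' : 'M[R]_(M, minn N M)),
    [/\ Uf'^T *m Uf' = 1%:M, Vf'^T *m Vf' = 1%:M, (forall i, 0 <= d' 0 i),
        (forall i j : 'I_(minn N M), (i <= j)%N -> d' 0 j <= d' 0 i) &
        forall j : 'I_(minn N M), svd_term Uf' d' Vf' j =
          ord_zext (fun o => Q *m svd_term Uf d Vf o *m P^T) j].
Proof.
move=> nN mM QQ PP UU VV d_ge0 d_mono.
have kK : (minn n m <= minn N M)%N by rewrite leq_min !geq_min nN mM orbT.
have [g [ong gU]] := orthonormal_extend kK (geq_minl N M) (orthonormal_cols QQ UU).
have [h [onh hV]] := orthonormal_extend kK (geq_minr N M) (orthonormal_cols PP VV).
pose dz := ord_zext (fun o => d 0 o).
have dz_ge0 j : 0 <= dz j.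
  rewrite /dz; case: (ltnP j (minn n m)) => jk; last by rewrite ord_zext_ge.
  by rewrite ord_zextE.
exists (fam_mx _ g), (\row_j dz j), (fam_mx _ h).
split=> [||i|i j ij|j]; rewrite ?fam_mx_orthonormal ?mxE //.
  rewrite /dz; case: (ltnP j (minn n m)) => jk; last by rewrite [ord_zext _ j]ord_zext_ge.
  have ik : (i < minn n m)%N by apply: leq_ltn_trans jk.
  by rewrite (ord_zextE _ jk) (ord_zextE _ ik) d_mono.
rewrite /svd_term !col_fam_mx mxE /dz.
case: (ltnP j (minn n m)) => jk; last by rewrite !ord_zext_ge ?scale0r.
by rewrite gU ?hV // !(ord_zextE _ jk) trmx_mul -scalemxAr -scalemxAl !mulmxA.
Qed.

Lemma truncated_svd_isometry n m N M k (Q : 'M[R]_(N, n)) (P : 'M[R]_(M, m))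
    (A T : 'M[R]_(n, m)) :
  (n <= N)%N -> (m <= M)%N -> Q^T *m Q = 1%:M -> P^T *m P = 1%:M ->
  truncated_svd k A T -> truncated_svd k (Q *m A *m P^T) (Q *m T *m P^T).
Proof.
move=> nN mM QQ PP [Uf [d [Vf [[UU VV d_ge0 d_mono ->] ->]]]].
have [Uf' [d' [Vf' [UU' VV' d'_ge0 d'_mono terms]]]] :=
  svd_isometry_extend nN mM QQ PP UU VV d_ge0 d_mono.
have kK : (minn n m <= minn N M)%N by rewrite leq_min !geq_min nN mM orbT.
have conj_sum (C : pred nat) :
    Q *m (\sum_(o < minn n m | C o) svd_term Uf d Vf o) *m P^T =
    \sum_(j < minn N M | C j) svd_term Uf' d' Vf' j.
  rewrite (eq_bigr _ (fun j _ => terms j)) sum_ord_zext //.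
  by rewrite mulmx_sumr mulmx_suml; apply: eq_bigr.
exists Uf', d', Vf'; split; last exact: (conj_sum (fun j => j < k)%N).
by split=> //; rewrite !svd_term_sum (conj_sum xpredT).
Qed.

End TruncatedSVD.

Section Projections.
Variable R : realType.

Lemma invmx_mul n (A B : 'M[R]_n) : A \in unitmx -> B \in unitmx ->
  invmx (A *m B) = invmx B *m invmx A.
Proof.
move=> uA uB; have uAB : A *m B \in unitmx by rewrite unitmx_mul uA uB.
have AB_inv : A *m B *m (invmx B *m invmx A) = 1%:M.
  by rewrite -mulmxA (mulmxA B) mulmxV // mul1mx mulmxV.
by rewrite -[LHS]mulmx1 -AB_inv mulKmx.
Qed.

Lemma posdef_unitmx n (A : 'M[R]_n) : posdef A -> A \in unitmx.
Proof.
move=> [_ A_pos]; rewrite unitmxE unitfE; apply/negP => /det0P [v vN0 vA].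
have : v^T != 0 by rewrite trmx_eq0.
by move/A_pos; rewrite trmxK vA mul0mx mxE ltxx.
Qed.

Lemma hat_mx_polar N p (X Q : 'M[R]_(N, p)) (S : 'M[R]_p) :
  Q^T *m Q = 1%:M -> posdef S -> X = Q *m S -> hat_mx X = Q *m Q^T.
Proof.
move=> QQ /posdef_unitmx uS ->; have uST : S^T \in unitmx by rewrite unitmx_tr.
rewrite /hat_mx trmx_mul -(mulmxA S^T) (mulmxA Q^T) QQ mul1mx invmx_mul //.
rewrite -!mulmxA (mulmxA S) mulmxV // mul1mx (mulmxA (invmx S^T)) mulVmx //.
by rewrite mul1mx.
Qed.

Lemma orthogonal_row_mx_compl N p (Q1 : 'M[R]_(N, p)) (Q2 : 'M[R]_(N, N - p)) :
  (row_mx Q1 Q2)^T *m row_mx Q1 Q2 = 1%:M ->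
  row_mx Q1 Q2 *m (row_mx Q1 Q2)^T = 1%:M ->
  Q2^T *m Q2 = 1%:M /\ 1%:M - Q1 *m Q1^T = Q2 *m Q2^T.
Proof.
rewrite tr_row_mx mul_col_row mul_row_col (scalar_mx_block p (N - p)).
move=> /eq_block_mx [_ _ _ ->] QQt; split => //.
by rewrite -QQt addrC addKr.
Qed.

Lemma resid_quad_isometry n m N M (Q : 'M[R]_(N, n)) (P : 'M[R]_(M, m))
    (E : 'M[R]_(n, m)) (s : 'cV[R]_M) :
  Q^T *m Q = 1%:M -> resid_quad (Q *m E *m P^T) s = resid_quad E (P^T *m s).
Proof.
move=> QQ; rewrite /resid_quad !trmx_mul !trmxK !mulmxA.
by rewrite -(mulmxA _ Q^T Q) QQ mulmx1.
Qed.

End Projections.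

Theorem theorem1 (R : realType) (dsp : measure_display) (Omega : measurableType dsp)
  (P : probability Omega R)
  (N M p q r rhat : nat)
  (X : 'M[R]_(N, p)) (Z : 'M[R]_(M, q))
  (A : 'M[R]_(N, q)) (B : 'M[R]_(M, p)) (U : 'M[R]_(N, r)) (V : 'M[R]_(M, r))
  (Sigma : 'M[R]_M) (E : Omega -> 'M[R]_(N, M)) (s : 'cV[R]_M)
  (Q1 : 'M[R]_(N, p)) (R1 : 'M[R]_p) (Q2 : 'M[R]_(N, N - p))
  (P1 : 'M[R]_(M, q)) (S1 : 'M[R]_q) (P2 : 'M[R]_(M, M - q))
  (Ehat : Omega -> 'M[R]_(N, M)) (Ehat22 : Omega -> 'M[R]_(N - p, M - q)) :
  \rank X = p -> \rank Z = q ->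
  \rank (U *m V^T) = r -> X^T *m U = 0 -> Z^T *m V = 0 ->
  psd Sigma ->
  (forall C : 'M[R]_(N, M),
     measurable_fun setT (fun w => \sum_i \sum_j C i j * E w i j) /\
     forall Bs : set R, measurable Bs ->
       P ((fun w => \sum_i \sum_j C i j * E w i j) @^-1` Bs) =
       centered_normal_law (\sum_i (row i C *m Sigma *m (row i C)^T) 0 0) Bs) ->
  Z^T *m s = 0 -> 0 < (s^T *m Sigma *m s) 0 0 ->
  Q1^T *m Q1 = 1%:M -> posdef R1 -> X = Q1 *m R1 ->
  P1^T *m P1 = 1%:M -> posdef S1 -> Z = P1 *m S1 ->
  (row_mx Q1 Q2)^T *m row_mx Q1 Q2 = 1%:M -> row_mx Q1 Q2 *m (row_mx Q1 Q2)^T = 1%:M ->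
  (row_mx P1 P2)^T *m row_mx P1 P2 = 1%:M -> row_mx P1 P2 *m (row_mx P1 P2)^T = 1%:M ->
  let Y := fun w => A *m Z^T + X *m B^T + U *m V^T + E w in
  let E0 := fun w => (1%:M - hat_mx X) *m Y w *m (1%:M - hat_mx Z) in
  let Y22 := fun w => Q2^T *m Y w *m P2 in
  let s2 := P2^T *m s in
  let sigma2 := (s^T *m Sigma *m s) 0 0 in
  (forall w, exists T, truncated_svd rhat (E0 w) T /\ Ehat w = E0 w - T) ->
  (forall w, exists T, truncated_svd rhat (Y22 w) T /\ Ehat22 w = Y22 w - T) ->
  measurable_fun setT (fun w => resid_quad (Ehat w) s) ->
  measurable_fun setT (fun w => resid_quad (Ehat22 w) s2) ->
  {ae P, forall w, forall T1 T2, truncated_svd rhat (E0 w) T1 ->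
                   truncated_svd rhat (E0 w) T2 -> T1 = T2} ->
  ((\int[P]_w (resid_quad (Ehat w) s)%:E) * (sigma2^-1)%:E =
   (\int[P]_w (resid_quad (Ehat22 w) s2)%:E) * (sigma2^-1)%:E)%E.
Proof.
move=> _ _ _ _ _ _ _ _ _ Q1Q1 R1pd XQ P1P1 S1pd ZP QQ QQt PP PPt.
move=> Y E0 Y22 s2 sigma2 Ehat_def Ehat22_def mEhat mEhat22 svd_unique.
have [Q2Q2 HXc] := orthogonal_row_mx_compl QQ QQt.
have [P2P2 HZc] := orthogonal_row_mx_compl PP PPt.
have E0_Y22 w : E0 w = Q2 *m Y22 w *m P2^T.
  rewrite /E0 /Y22 (hat_mx_polar Q1Q1 R1pd XQ) (hat_mx_polar P1P1 S1pd ZP).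
  by rewrite HXc HZc !mulmxA.
congr (_ * _)%E; apply: ae_eq_integral => //.
- exact/measurable_EFinP.
- exact/measurable_EFinP.
apply: filterS svd_unique => w T_unique _.
have [T22 [T22_svd ->]] := Ehat22_def w.
have [T [T_svd ->]] := Ehat_def w.
have T22_svd' :=
  truncated_svd_isometry (leq_subr p N) (leq_subr q M) Q2Q2 P2P2 T22_svd.
rewrite -E0_Y22 in T22_svd'.
rewrite (T_unique _ _ T_svd T22_svd') E0_Y22 -mulmxBl -mulmxBr.
by rewrite resid_quad_isometry.
Qed.
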